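(* (i) If $\nu$ is a shift-invariant ergodic Borel probability measure on $\Sigma_\alpha$ with $\nu(\{\zeta\in\Sigma_\alpha:\zeta_0=\beta\})<\frac12$, then $\nu(\phi_\alpha(B_\alpha))=1$. (ii) If $\nu$ is a shift-invariant ergodic Borel probability measure on $\Sigma_\beta$ with $\nu(\{\zeta\in\Sigma_\beta:\zeta_0=\alpha\})<\frac12$, then $\nu(\phi_\beta(B_\beta))=1$.
   Context: Fix an integer $M\ge2$ and let $D=\{\alpha_1,\dots,\alpha_M,\beta_1,\dots,\beta_M\}$. Dyck shift. Consider the monoid with zero generated by $D$ with unit $1$ and relations $\alpha_i\beta_j=\delta_{ij}$ (Kronecker delta). The two-sided Dyck shift is $\Sigma_D=\{\omega\in D^{\mathbb Z}:\omega_j\omega_{j+1}\cdots\omega_k\ne0$ in this monoid for all $j<k\}$. Height functions. Let $s(\alpha_k)=1$ and $s(\beta_k)=-1$. For $\omega\in\Sigma_D$, the integers $H_i(\omega)$, $i\in\mathbb Z$, are determined by $H_0=0$ and $H_{i+1}(\omega)-H_i(\omega)=s(\omega_i)$. The sets $B_\alpha,B_\beta$. $B_\alpha$ is the set of $\omega\in\Sigma_D$ such that for every $i\in\mathbb Z$, either $\omega_i\in\{\alpha_1,\dots,\alpha_M\}$, or $\omega_i\in\{\beta_1,\dots,\beta_M\}$ and $H_{i-j+1}(\omega)=H_{i+1}(\omega)$ for some $j\ge1$. $B_\beta$ is the set of $\omega\in\Sigma_D$ such that for every $i$, either $\omega_i\in\{\beta_1,\dots,\beta_M\}$, or $\omega_i\in\{\alpha_1,\dots,\alpha_M\}$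 and $H_{i+j}(\omega)=H_i(\omega)$ for some $j\ge1$. Full shifts. $\Sigma_\alpha=\{\alpha_1,\dots,\alpha_M,\beta\}^{\mathbb Z}$ and $\Sigma_\beta=\{\alpha,\beta_1,\dots,\beta_M\}^{\mathbb Z}$ are full shifts with left shifts. $\phi_\alpha:B_\alpha\to\Sigma_\alpha$ replaces every symbol $\beta_k$ by $\beta$ (keeping $\alpha_k$). $\phi_\beta:B_\beta\to\Sigma_\beta$ replaces every $\alpha_k$ by $\alpha$ (keeping $\beta_k$). *)

From HB Require Import structures.
From mathcomp Require Import all_boot all_order all_algebra.
From mathcomp Require Import all_classical all_reals all_analysis.
Set Implicit Arguments. Unset Strict Implicit. Unset Printing Implicit Defensive.
Import Order.TTheory GRing.Theory Num.Theory.
Local Open Scope classical_set_scope.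
Local Open Scope ring_scope.

(* ---------- Dyck alphabet D = {alpha_1..alpha_M, beta_1..beta_M} ----------
   inl k = alpha_k, inr k = beta_k  (k : 'I_M). *)
Definition dyck_letter (M : nat) := ('I_M + 'I_M)%type.

(* Normal form of an element of the Dyck monoid with zero (relations
   alpha_i beta_j = delta_ij).  Every nonzero element is uniquely
   beta_{b_1}...beta_{b_p} alpha_{a_1}...alpha_{a_q}; we represent it as
   Some (bs, stack) where bs = [b_1;...;b_p] and stack = [a_q;...;a_1]
   (top of stack first).  None is the zero of the monoid. *)
Definition dyck_step (M : nat) (st : option (seq 'I_M * seq 'I_M))
  (x : dyck_letter M) : option (seq 'I_M * seq 'I_M) :=
  match st with
  | None => None
  | Some (bs, st) =>
      match x with
      | inl i => Some (bs, i :: st)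
      | inr j =>
          match st with
          | [::] => Some (rcons bs j, [::])
          | i :: st' => if i == j then Some (bs, st') else None
          end
      end
  end.

Definition dyck_eval (M : nat) (w : seq (dyck_letter M)) :=
  foldl (@dyck_step M) (Some ([::], [::])) w.

Definition subword (X : Type) (w : int -> X) (j k : int) : seq X :=
  mkseq (fun n : nat => w (j + n%:Z)) (`|k - j|%N.+1).

Definition DyckShift (M : nat) : set (int -> dyck_letter M) :=
  [set w | forall j k : int, j < k -> dyck_eval (subword w j k) != None].

Definition sgn_letter (M : nat) (x : dyck_letter M) : int :=
  match x with inl _ => 1 | inr _ => -1 end.

(* Height function: H_0 = 0 and H_{i+1} - H_i = s(omega_i). *)
Definition height (M : nat) (w : int -> dyck_letter M) (i : int) : int :=
  match i with
  | Posz n => \sum_(m < n) sgn_letter (w m%:Z)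
  | Negz n => - \sum_(m < n.+1) sgn_letter (w (- (m.+1)%:Z))
  end.

Definition is_alpha (M : nat) (x : dyck_letter M) : bool :=
  if x is inl _ then true else false.
Definition is_beta (M : nat) (x : dyck_letter M) : bool :=
  if x is inr _ then true else false.

Definition B_alpha (M : nat) : set (int -> dyck_letter M) :=
  [set w | DyckShift w /\
    forall i : int, is_alpha (w i) \/
      (is_beta (w i) /\
       exists j : int, 1 <= j /\ height w (i - j + 1) = height w (i + 1))].

Definition B_beta (M : nat) : set (int -> dyck_letter M) :=
  [set w | DyckShift w /\
    forall i : int, is_beta (w i) \/
      (is_alpha (w i) /\
       exists j : int, 1 <= j /\ height w (i + j) = height w i)].

(* ---------- Full shifts on M+1 symbols ----------
   Sigma_alpha = {alpha_1..alpha_M, beta}^Z : Some k = alpha_k, None = beta.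
   Sigma_beta  = {alpha, beta_1..beta_M}^Z  : Some k = beta_k,  None = alpha.
   Both are the type int -> option 'I_M, equipped with the Borel sigma-algebra
   of the product topology, i.e. the sigma-algebra generated by the
   one-coordinate cylinders. *)
Definition fullshift_pts (M : nat) := int -> option 'I_M.

Definition cylinders (M : nat) : set (set (fullshift_pts M)) :=
  [set A | exists (n : int) (a : option 'I_M), A = [set w | w n = a]].

Definition FullShift (M : nat) := g_sigma_algebraType (@cylinders M).

Definition left_shift (M : nat) (w : FullShift M) : FullShift M :=
  fun i => w (i + 1).

Definition shift_invariant (M : nat) (R : realType)
  (nu : probability (FullShift M) R) : Prop :=
  forall A : set (FullShift M), measurable A ->
    nu (@left_shift M @^-1` A) = nu A.

Definition ergodic (M : nat) (R : realType)
  (nu : probability (FullShift M) R) : Prop :=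
  forall A : set (FullShift M), measurable A -> @left_shift M @^-1` A = A ->
    nu A = 0%E \/ nu A = 1%E.

Definition phi_alpha (M : nat) (w : int -> dyck_letter M) : FullShift M :=
  fun i => match w i with inl k => Some k | inr _ => None end.
Definition phi_beta (M : nat) (w : int -> dyck_letter M) : FullShift M :=
  fun i => match w i with inl _ => None | inr k => Some k end.

From HB Require Import structures.
From mathcomp Require Import all_boot all_order all_algebra.
From mathcomp Require Import all_classical all_reals all_analysis.
From mathcomp Require Import zify lra.
Import Order.TTheory GRing.Theory Num.Theory.
Set Implicit Arguments. Unset Strict Implicit. Unset Printing Implicit Defensive.
Local Open Scope classical_set_scope.
Local Open Scope ring_scope.

(* Via phi_alpha, B_alpha is the set of points of the full shift in which every
   beta is matched: the walk with steps +1 at alphas and -1 at betas returns,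
   before the beta, to the level it reaches just after it; copying to each beta
   the index of its matching alpha lifts such a point to the Dyck shift.
   Call an alpha at k free if the walk never comes back to H_k after k.  If free
   alphas had probability 0, the matching would inject alpha positions into
   beta positions in a shift-equivariant way, giving nu(alpha) <= nu(beta),
   which contradicts nu(beta) < 1/2.  So free alphas occur with positive
   probability, hence almost surely by ergodicity, hence almost surely at a
   negative position by shift invariance.  But an unmatched beta cannot follow
   a free alpha (the walk would have to stay both above and below), so
   unmatched betas are null events.  Part (ii) is part (i) for the time-reversed
   measure. *)

Definition walk (X : Type) (s : X -> int) (f : int -> X) (i : int) : int :=
  match i with
  | Posz n => \sum_(m < n) s (f m%:Z)
  | Negz n => - \sum_(m < n.+1) s (f (- (m.+1)%:Z))
  end.

Section Walk.
Variables (X : Type) (s : X -> int) (f : int -> X).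

Lemma walk0 : walk s f 0 = 0.
Proof. by rewrite /= big_ord0. Qed.

Lemma walkD1 i : walk s f (i + 1) = walk s f i + s (f i).
Proof.
case: i => [n|[|n]].
- have -> : n%:Z + 1 = n.+1%:Z by lia.
  by rewrite /= big_ord_recr.
- rewrite (_ : Negz 0 + 1 = 0) // walk0 /= big_ord1 /=.
  by rewrite -[(-1)%Z]/(- 1%:Z) addNr.
- have -> : Negz n.+1 + 1 = Negz n by rewrite !NegzE; lia.
  rewrite /= [in RHS]big_ord_recr /= opprD -addrA.
  by rewrite -[Negz n.+1]/(- (n.+2)%:Z) addNr addr0.
Qed.

Lemma walkB1 i : walk s f (i - 1) = walk s f i - s (f (i - 1)).
Proof. by rewrite -[in walk s f i](subrK 1 i) walkD1 addrK. Qed.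

Lemma walk_unique (F : int -> int) :
  F 0 = 0 -> (forall i, F (i + 1) = F i + s (f i)) -> forall i, F i = walk s f i.
Proof.
move=> F0 FS; elim/int_rect => [|n IH|n IH].
- by rewrite F0 walk0.
- have -> : n.+1%:Z = n%:Z + 1 by lia.
  by rewrite FS walkD1 IH.
- have e : - (n.+1)%:Z = - n%:Z - 1 by lia.
  by have := FS (- n%:Z - 1); rewrite subrK e walkB1 IH => ->; rewrite addrK.
Qed.

Lemma walk_increment (a : int) (n : nat) :
  walk s f (a + n%:Z) - walk s f a = \sum_(m < n) s (f (a + m%:Z)).
Proof.
elim: n => [|n IH]; first by rewrite big_ord0 addr0 subrr.
have -> : n.+1%:Z = n%:Z + 1 by lia.
by rewrite big_ord_recr /= -IH addrA walkD1 addrAC.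
Qed.

End Walk.

Lemma walk_shift (X : Type) (s : X -> int) (f : int -> X) (c : int) i :
  walk s (fun j => f (j + c)) i = walk s f (i + c) - walk s f c.
Proof.
symmetry; apply: (@walk_unique _ s (fun j => f (j + c))
  (fun i => walk s f (i + c) - walk s f c)) => [|j].
  by rewrite add0r subrr.
by rewrite -addrA [1 + c]addrC addrA walkD1 addrAC.
Qed.

Lemma eq_walk (X Y : Type) (s : X -> int) (s' : Y -> int) f g :
  (forall i, s (f i) = s' (g i)) -> walk s f =1 walk s' g.
Proof. by move=> e i; apply: walk_unique => [|j]; rewrite ?walk0 // walkD1 e. Qed.

Lemma height_walk M (w : int -> dyck_letter M) : height w =1 walk (@sgn_letter M) w.
Proof. by []. Qed.

Lemma unit_steps_stay_above (f : nat -> int) (c : int) (K : nat) :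
  (forall m, f m.+1 = f m + 1 \/ f m.+1 = f m - 1) -> c < f 0 ->
  (forall m, (m <= K)%N -> f m != c) -> forall m, (m <= K)%N -> c < f m.
Proof.
move=> st c0 ne; elim=> [//|m IH] le.
by have := IH (ltnW le); have := ne _ le; case: (st m) => ->; lia.
Qed.

Section DyckWindow.
Variables (M : nat) (w : nat -> dyck_letter M).

Definition prefix_height (t : nat) : int := \sum_(m < t) sgn_letter (w m).

Lemma prefix_heightS t : prefix_height t.+1 = prefix_height t + sgn_letter (w t).
Proof. by rewrite /prefix_height big_ord_recr. Qed.

(* The k-th entry of the stack of the normal form of w_0 ... w_(t-1) is the
   letter of the last alpha at which the walk left level H_t - 1 - k. *)
Definition open_stack (t : nat) (st : seq 'I_M) : Prop :=
  forall k, (k < size st)%N -> exists a x, [/\ (a < t)%N, w a = inl x, nth x st k = x,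
    prefix_height a = prefix_height t - 1 - k%:Z &
    forall c, (a < c)%N -> (c <= t)%N -> prefix_height a < prefix_height c].

Lemma open_stack_push t st x :
  w t = inl x -> open_stack t st -> open_stack t.+1 (x :: st).
Proof.
move=> wt W [|k] /= klt.
  exists t, x; split => //; first by rewrite prefix_heightS wt /=; lia.
  move=> c tc ct; have -> : c = t.+1 by lia.
  by rewrite prefix_heightS wt /=; lia.
have [a [x' [at1 wa nx ha hc]]] := W k klt.
exists a, x'; split => //; first exact: ltnW.
  by rewrite prefix_heightS wt /= ha; lia.
move=> c ac ct; case: (ltngtP c t.+1) => [ct'|ct'|->]; [by apply: hc | lia |].
by have := hc t at1 (leqnn t); rewrite prefix_heightS wt /=; lia.
Qed.

Lemma open_stack_pop t i st y :
  w t = inr y -> open_stack t (i :: st) -> open_stack t.+1 st.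
Proof.
move=> wt W k klt; have [a [x [at1 wa nx ha hc]]] := W k.+1 klt.
exists a, x; split => //; first exact: ltnW.
  by rewrite prefix_heightS wt /= ha; lia.
move=> c ac ct; case: (ltngtP c t.+1) => [ct'|ct'|->]; [by apply: hc | lia |].
by rewrite prefix_heightS wt /= ha; lia.
Qed.

Lemma dyck_eval_rcons (s : seq (dyck_letter M)) x :
  dyck_eval (rcons s x) = dyck_step (dyck_eval s) x.
Proof. by rewrite /dyck_eval foldl_rcons. Qed.

Lemma dyck_eval_mkseq_neq0 L :
  (forall a b x y, (a < b)%N -> (b < L)%N -> w a = inl x -> w b = inr y ->
     prefix_height b.+1 = prefix_height a ->
     (forall c, (a < c)%N -> (c <= b)%N -> prefix_height a < prefix_height c) ->
     x = y) ->
  dyck_eval (mkseq w L) != None.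
Proof.
move=> match_wL.
suff: forall t, (t <= L)%N ->
    exists bs st, dyck_eval (mkseq w t) = Some (bs, st) /\ open_stack t st.
  by move=> /(_ L (leqnn L)) [bs [st [-> _]]].
elim=> [_|t IH tL]; first by exists [::], [::].
have [bs [st [e W]]] := IH (ltnW tL).
rewrite mkseqS dyck_eval_rcons e /=.
case wt: (w t) => [x|y]; first by exists bs, (x :: st); split; last exact: open_stack_push.
case: st W e => [|i st'] W e; first by exists (rcons bs y), [::].
have [a [x [at1 wa /= -> ha hc]]] := W 0%N isT.
have -> : x = y.
  by apply: (match_wL a t) => //; rewrite prefix_heightS wt ha /=; lia.
by rewrite eqxx; exists bs, st'; split; last exact: open_stack_pop wt W.
Qed.

End DyckWindow.

Definition matching_consistent M (om : int -> dyck_letter M) := forall (a b : int) x y,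
  a < b -> om a = inl x -> om b = inr y -> height om (b + 1) = height om a ->
  (forall c, a < c -> c <= b -> height om a < height om c) -> x = y.

Lemma prefix_height_shift M (om : int -> dyck_letter M) (j : int) t :
  prefix_height (fun n : nat => om (j + n%:Z)) t = height om (j + t%:Z) - height om j.
Proof. by rewrite !height_walk walk_increment. Qed.

Lemma matching_consistent_DyckShift M (om : int -> dyck_letter M) :
  matching_consistent om -> DyckShift om.
Proof.
move=> match_om j k jk; apply: dyck_eval_mkseq_neq0 => a b x y ab bL wa wb hb hc.
apply: (match_om (j + a%:Z) (j + b%:Z)) => //.
- by rewrite ltrD2l ltz_nat.
- move/eqP: hb; rewrite !prefix_height_shift (can_eq (addrK _)) => /eqP.
  by rewrite (_ : j + b.+1%:Z = j + b%:Z + 1) //; lia.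
- move=> c ac cb; have := hc `|c - j|%N; rewrite !prefix_height_shift.
  have -> : j + (`|c - j|%N)%:Z = c by lia.
  by rewrite ltrD2r; apply; lia.
Qed.

Section Images.
Variable M : nat.
Implicit Types z : int -> option 'I_M.

Definition stepA (o : option 'I_M) : int := if o is Some _ then 1 else -1.
Definition stepB (o : option 'I_M) : int := if o is Some _ then -1 else 1.

Definition matchedA : set (FullShift M) := [set z | forall i : int, z i <> None \/
  exists j : int, 1 <= j /\ walk stepA z (i - j + 1) = walk stepA z (i + 1)].
Definition matchedB : set (FullShift M) := [set z | forall i : int, z i <> None \/
  exists j : int, 1 <= j /\ walk stepB z (i + j) = walk stepB z i].

Definition partnerA z (i : int) : int :=
  match pselect (exists n : nat,
          (0 < n)%N && (walk stepA z (i + 1 - n%:Z) == walk stepA z (i + 1))) with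
  | left e => i + 1 - (ex_minn e)%:Z
  | right _ => i
  end.

Definition partnerB z (i : int) : int :=
  match pselect (exists n : nat,
          (0 < n)%N && (walk stepB z (i + n%:Z) == walk stepB z i)) with
  | left e => i + (ex_minn e)%:Z - 1
  | right _ => i
  end.

Lemma partnerA_spec z (a b : int) : a < b ->
  walk stepA z (b + 1) = walk stepA z a ->
  (forall c, a < c -> c <= b -> walk stepA z a < walk stepA z c) -> partnerA z b = a.
Proof.
move=> ab hb hc; rewrite /partnerA.
have eba : b + 1 - (absz (b + 1 - a)%R)%:Z = a by lia.
case: pselect => [e|[]]; last first.
  by exists (absz (b + 1 - a)%R); rewrite eba hb eqxx andbT; lia.
case: (ex_minnP e) => n0 /andP [n0pos /eqP hn0] nmin.
have := nmin (absz (b + 1 - a)%R); rewrite eba hb eqxx andbT => /(_ ltac:(lia)) len.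
case: (ltgtP a (b + 1 - n0%:Z)) => [lt|gt|-> //]; last by lia.
by have := hc _ lt ltac:(lia); rewrite hn0 hb ltxx.
Qed.

Lemma partnerB_spec z (a b : int) : a < b ->
  walk stepB z (b + 1) = walk stepB z a ->
  (forall c, a < c -> c <= b -> walk stepB z a < walk stepB z c) -> partnerB z a = b.
Proof.
move=> ab hb hc; rewrite /partnerB.
have eab : a + (absz (b + 1 - a)%R)%:Z = b + 1 by lia.
case: pselect => [e|[]]; last first.
  by exists (absz (b + 1 - a)%R); rewrite eab hb eqxx andbT; lia.
case: (ex_minnP e) => n0 /andP [n0pos /eqP hn0] nmin.
have := nmin (absz (b + 1 - a)%R); rewrite eab hb eqxx andbT => /(_ ltac:(lia)) len.
case: (ltgtP (a + n0%:Z) (b + 1)) => [lt|gt|eq]; [|lia|lia].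
by have := hc (a + n0%:Z) ltac:(lia) ltac:(lia); rewrite hn0 ltxx.
Qed.

(* A junk index, used only for letters without a partner. *)
Variable d0 : 'I_M.

Definition liftA z (i : int) : dyck_letter M :=
  match z i with
  | Some x => inl x
  | None => inr (if z (partnerA z i) is Some x then x else d0)
  end.

Definition liftB z (i : int) : dyck_letter M :=
  match z i with
  | Some x => inr x
  | None => inl (if z (partnerB z i) is Some x then x else d0)
  end.

Lemma height_liftA z : height (liftA z) = walk stepA z.
Proof. by apply/funext/eq_walk => j; rewrite /liftA; case: (z j). Qed.

Lemma height_liftB z : height (liftB z) = walk stepB z.
Proof. by apply/funext/eq_walk => j; rewrite /liftB; case: (z j). Qed.

Lemma matching_consistent_liftA z : matching_consistent (liftA z).
Proof.
move=> a b x y ab; rewrite !height_liftA /liftA.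
case za: (z a) => [x'|] // [<-]; case zb: (z b) => [//|] [<-] hb hc.
by rewrite (partnerA_spec ab hb) ?za //.
Qed.

Lemma matching_consistent_liftB z : matching_consistent (liftB z).
Proof.
move=> a b x y ab; rewrite !height_liftB /liftB.
case za: (z a) => [//|] [<-]; case zb: (z b) => [y'|//] [<-] hb hc.
by rewrite (partnerB_spec ab hb) ?zb //.
Qed.

Lemma image_phi_alpha : @phi_alpha M @` @B_alpha M = matchedA.
Proof.
apply/seteqP; split.
  move=> _ [om [_ Hom] <-] i.
  have hh : walk stepA (phi_alpha om) =1 height om.
    by apply: eq_walk => j; rewrite /phi_alpha; case: (om j).
  case: (Hom i) => [om_i|[_ [j [j1 hj]]]]; last by right; exists j; rewrite !hh.
  by left; rewrite /phi_alpha; case: (om i) om_i.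
move=> z Cz; exists (liftA z); last first.
  by apply: funext => i; rewrite /phi_alpha /liftA; case: (z i).
split; first exact/matching_consistent_DyckShift/matching_consistent_liftA.
move=> i; rewrite /liftA; case zi: (z i) => [x|]; first by left.
case: (Cz i) => [//|[j [j1 hj]]].
by right; split => //; exists j; rewrite !height_liftA.
Qed.

Lemma image_phi_beta : @phi_beta M @` @B_beta M = matchedB.
Proof.
apply/seteqP; split.
  move=> _ [om [_ Hom] <-] i.
  have hh : walk stepB (phi_beta om) =1 height om.
    by apply: eq_walk => j; rewrite /phi_beta; case: (om j).
  case: (Hom i) => [om_i|[_ [j [j1 hj]]]]; last by right; exists j; rewrite !hh.
  by left; rewrite /phi_beta; case: (om i) om_i.
move=> z Cz; exists (liftB z); last first.
  by apply: funext => i; rewrite /phi_beta /liftB; case: (z i).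
split; first exact/matching_consistent_DyckShift/matching_consistent_liftB.
move=> i; rewrite /liftB; case zi: (z i) => [x|]; first by left.
case: (Cz i) => [//|[j [j1 hj]]].
by right; split => //; exists j; rewrite !height_liftB.
Qed.

End Images.

Section Events.
Variable M : nat.
Local Notation T := (FullShift M).
Local Notation H := (walk (@stepA M)).

Lemma measurable_cylinder (n : int) (a : option 'I_M) : measurable [set z : T | z n = a].
Proof. by apply: sub_sigma_algebra; exists n, a. Qed.

Definition shift_by (n : int) (z : T) : T := fun i => z (i + n).

Lemma measurable_shift_by n : measurable_fun setT (shift_by n).
Proof.
apply: (@measurability _ _ _ _ setT (shift_by n) (@cylinders M)) => //.
move=> _ [_ [m [a ->]] <-]; rewrite setTI.
by rewrite (_ : _ @^-1` _ = [set z : T | z (m + n) = a]) //; exact: measurable_cylinder.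
Qed.

Lemma measurable_preimage_shift_by n (A : set T) :
  measurable A -> measurable (shift_by n @^-1` A).
Proof. by move=> mA; rewrite -[_ @^-1` _]setTI; apply: measurable_shift_by. Qed.

Lemma measurable_walk_increment (a : int) (n : nat) (c : int) :
  measurable [set z : T | H z (a + n%:Z) - H z a = c].
Proof.
elim: n c => [|n IH] c.
  have [->|c0] := eqVneq c 0.
    rewrite (_ : [set _ | _] = setT) //.
    by apply/seteqP; split => z //= _; rewrite addr0 subrr.
  rewrite (_ : [set _ | _] = set0) //; apply/seteqP; split => z //=.
  by rewrite addr0 subrr => /esym/eqP; rewrite (negbTE c0).
rewrite (_ : [set _ | _] =
    ([set z : T | z (a + n%:Z) = None] `&` [set z | H z (a + n%:Z) - H z a = c + 1]) `|`
    (~` [set z : T | z (a + n%:Z) = None] `&` [set z | H z (a + n%:Z) - H z a = c - 1])).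
  apply: measurableU; apply: measurableI; try exact: IH.
    exact: measurable_cylinder.
  apply: measurableC; exact: measurable_cylinder.
have HS z : H z (a + n.+1%:Z) = H z (a + n%:Z) + stepA (z (a + n%:Z)).
  by rewrite -walkD1; congr H; lia.
apply/seteqP; split => z /=; rewrite HS; case: (z _) => [x|] /=;
  move: (H z (a + n%:Z)) (H z a) => p q.
- by move=> h; right; split => //; lia.
- by move=> h; left; split => //; lia.
- by case=> -[h1 h2] //; lia.
- by case=> -[h1 h2]; [lia | case: h1].
Qed.

Lemma measurable_walk_eq (x y : int) : measurable [set z : T | H z x = H z y].
Proof.
wlog le_xy : x y / x <= y.
  move=> hwlog; case: (lerP x y) => [/hwlog //|/ltW /hwlog].
  by rewrite (_ : [set _ | _] = [set z : T | H z x = H z y]) //;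
    apply/seteqP; split => z /= /esym.
rewrite (_ : [set _ | _] = [set z : T | H z (x + (absz (y - x))%:Z) - H z x = 0]).
  exact: measurable_walk_increment.
have -> : x + (absz (y - x))%:Z = y by lia.
by apply/seteqP; split => z /= h; [rewrite h subrr | apply/eqP; rewrite eq_sym -subr_eq0 h].
Qed.

Lemma forall_int_ge1 (P : int -> Prop) :
  (forall j : int, 1 <= j -> P j) <-> (forall n : nat, P n.+1%:Z).
Proof.
split=> [h n|h j j1]; first by apply: h; lia.
by have -> : j = (absz j).-1.+1%:Z by lia.
Qed.

Definition unmatched_beta (i : int) : set T := [set z | z i = None /\
  forall j : int, 1 <= j -> H z (i - j + 1) <> H z (i + 1)].

Definition free_alpha (k : int) : set T := [set z | z k <> None /\
  forall j : int, 1 <= j -> H z (k + j) <> H z k].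

(* a beta at 0 whose matching alpha sits at -d *)
Definition beta0_matched_at (d : nat) : set T := [set z | z 0 = None /\
  H z (- d%:Z) = H z 1 /\ forall n : nat, (0 < n <= d)%N -> H z (1 - n%:Z) <> H z 1].

Lemma measurable_unmatched_beta i : measurable (unmatched_beta i).
Proof.
rewrite (_ : unmatched_beta i = [set z : T | z i = None] `&`
   \bigcap_n ~` [set z : T | H z (i - n.+1%:Z + 1) = H z (i + 1)]).
  apply: measurableI; first exact: measurable_cylinder.
  by apply: bigcapT_measurable => n; apply: measurableC; exact: measurable_walk_eq.
apply/seteqP; split => z [zi h]; split => //.
  by move=> n _; apply: h; lia.
by apply/forall_int_ge1 => n; exact: h.
Qed.

Lemma measurable_free_alpha k : measurable (free_alpha k).
Proof.
rewrite (_ : free_alpha k = ~` [set z : T | z k = None] `&`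
   \bigcap_n ~` [set z : T | H z (k + n.+1%:Z) = H z k]).
  apply: measurableI.
    by apply: measurableC; exact: measurable_cylinder.
  by apply: bigcapT_measurable => n; apply: measurableC; exact: measurable_walk_eq.
apply/seteqP; split => z [zk h]; split => //.
  by move=> n _; apply: h; lia.
by apply/forall_int_ge1 => n; exact: h.
Qed.

Lemma measurable_beta0_matched_at d : measurable (beta0_matched_at d).
Proof.
rewrite (_ : beta0_matched_at d = [set z : T | z 0 = None] `&`
   [set z : T | H z (- d%:Z) = H z 1] `&` \bigcap_n
   (if (0 < n <= d)%N then ~` [set z : T | H z (1 - n%:Z) = H z 1] else setT)).
  apply: measurableI; first apply: measurableI.
  - exact: measurable_cylinder.
  - exact: measurable_walk_eq.
  - by apply: bigcapT_measurable => n; case: ifP => // _;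
      apply: measurableC; exact: measurable_walk_eq.
apply/seteqP; split => z /=.
  by case=> z0 [h1 h2]; split=> // n _; case: ifP => // /h2.
by case=> -[z0 h1] h2; do 2!split=> //; move=> n nd; have := h2 n I; rewrite nd.
Qed.

Lemma walk_shift_by (z : T) m x : H (shift_by m z) x = H z (x + m) - H z m.
Proof. exact: walk_shift. Qed.

Lemma eq_walk_shift_by (z : T) m x y :
  (H (shift_by m z) x = H (shift_by m z) y) <-> (H z (x + m) = H z (y + m)).
Proof.
rewrite !walk_shift_by; split => [/eqP|->//].
by rewrite (can_eq (subrK _)) => /eqP.
Qed.

Lemma unmatched_beta_shift m i : shift_by m @^-1` unmatched_beta i = unmatched_beta (i + m).
Proof.
have e1 j : i - j + 1 + m = i + m - j + 1 by lia.
have e2 : i + 1 + m = i + m + 1 by lia.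
by apply/seteqP; split => z /= [zi h]; split => // j /h; rewrite eq_walk_shift_by e1 e2.
Qed.

Lemma free_alpha_shift m k : shift_by m @^-1` free_alpha k = free_alpha (k + m).
Proof.
have e j : k + j + m = k + m + j by lia.
by apply/seteqP; split => z /= [zk h]; split => // j /h; rewrite eq_walk_shift_by e.
Qed.

Lemma walk_stepA_unit (z : T) x : H z (x + 1) = H z x + 1 \/ H z (x + 1) = H z x - 1.
Proof. by rewrite walkD1 /stepA; case: (z x); [left|right]. Qed.

Lemma walk_stepA_unitN (z : T) x : H z (x - 1) = H z x + 1 \/ H z (x - 1) = H z x - 1.
Proof. by rewrite walkB1 /stepA; case: (z (x - 1)); [right|left; rewrite opprK]. Qed.

(* After a free alpha at k the walk stays above H_k, while between k and an
   unmatched beta at i it stays above H_(i+1); so H_k < H_(i+1) < H_k. *)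
Lemma free_alpha_unmatched_beta (z : T) k i :
  k < i -> free_alpha k z -> unmatched_beta i z -> False.
Proof.
move=> ki [zk hk] [zi hi].
have above_k : H z k < H z (i + 1).
  have -> : i + 1 = k + 1 + (absz (i - k))%:Z by lia.
  apply: (@unit_steps_stay_above (fun m : nat => H z (k + 1 + m%:Z))) => // [m||].
  - by rewrite (_ : k + 1 + m.+1%:Z = k + 1 + m%:Z + 1); [exact: walk_stepA_unit | lia].
  - by rewrite addr0 walkD1 /stepA; case: (z k) zk => // x _; rewrite ltrDl.
  - move=> m _; apply/eqP; have := hk m.+1%:Z ltac:(lia).
    by rewrite (_ : k + m.+1%:Z = k + 1 + m%:Z) //; lia.
have above_i1 : H z (i + 1) < H z k.
  have -> : k = i - (absz (i - k))%:Z by lia.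
  apply: (@unit_steps_stay_above (fun m : nat => H z (i - m%:Z))) => // [m||].
  - by rewrite (_ : i - m.+1%:Z = i - m%:Z - 1); [exact: walk_stepA_unitN | lia].
  - by rewrite subr0 walkD1 zi /= ltrBlDr ltrDl.
  - move=> m _; apply/eqP; have := hi m.+1%:Z ltac:(lia).
    by rewrite (_ : i - m.+1%:Z + 1 = i - m%:Z) //; lia.
by move: above_k above_i1; lia.
Qed.

(* The beta matching a non-free alpha at 0 sits just before the first return
   of the walk to level H_0. *)
Lemma alpha0_free_or_matched (z : T) : z 0 <> None ->
  free_alpha 0 z \/ exists d : nat, beta0_matched_at d (shift_by d%:Z z).
Proof.
move=> z0; have [|not_free] := pselect (free_alpha 0 z); first by left.
right.
have [N /andP [N0 /eqP HN] Nmin] : exists2 N : nat, (0 < N)%N && (H z N%:Z == H z 0) &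
    forall n, (0 < n)%N && (H z n%:Z == H z 0) -> (N <= n)%N.
  have ex : exists n : nat, (0 < n)%N && (H z n%:Z == H z 0).
    apply: contrapT => ne; apply: not_free; split=> // j j1 e; apply: ne.
    have ej : (absz j)%:Z = j by lia.
    by exists (absz j); rewrite -e add0r ej eqxx andbT; lia.
  by case: (ex_minnP ex) => N; exists N.
have H1 : H z 1 = H z 0 + 1 by rewrite -[1]add0r walkD1; case: (z 0) z0.
have N2 : (1 < N)%N.
  case: N N0 HN {Nmin} => [//|[|//]] _.
  by rewrite H1 => /eqP; rewrite -subr_eq0 addrAC subrr add0r.
have above : forall m : nat, (m <= N.-2)%N -> H z 0 < H z (1 + m%:Z).
  apply: unit_steps_stay_above => [m||m mN].
  - by rewrite (_ : 1 + m.+1%:Z = 1 + m%:Z + 1); [exact: walk_stepA_unit | lia].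
  - by rewrite addr0 H1 ltrDl.
  - apply/eqP => e; have em : m.+1%:Z = 1 + m%:Z by lia.
    by have := Nmin m.+1; rewrite em e eqxx => /(_ isT); lia.
have eN : 1 + N.-1%:Z = N%:Z by lia.
exists N.-1; split; [|split].
- rewrite /shift_by add0r; have := above N.-2 (leqnn _).
  have e2 : 1 + N.-2%:Z = N.-1%:Z by lia.
  have e1 : N%:Z = N.-1%:Z + 1 by lia.
  by rewrite e2; move: HN; rewrite e1 walkD1; case: (z _) => //= x; lia.
- by apply/eq_walk_shift_by; rewrite addNr eN.
- move=> n /andP [n0 nd] /eq_walk_shift_by; rewrite eN HN => e.
  have en : (N - n)%N%:Z = 1 - n%:Z + N.-1%:Z by lia.
  by have := Nmin (N - n)%N; rewrite en e eqxx andbT => /(_ ltac:(lia)); lia.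
Qed.

Lemma beta0_matched_at_disjoint (d d' : nat) :
  (d < d')%N -> beta0_matched_at d `&` beta0_matched_at d' = set0.
Proof.
move=> dd; apply/seteqP; split => // z /= [[_ [h _]] [_ [_ h']]].
by apply: (h' d.+1); [lia | rewrite (_ : 1 - d.+1%:Z = - d%:Z) //; lia].
Qed.

End Events.

Section Measure.
Variables (M : nat) (R : realType) (nu : probability (FullShift M) R).
Local Notation T := (FullShift M).
Local Notation beta0 := [set z : T | z (0%R : int) = None].

Lemma le_measure_nu (A B : set T) :
  measurable A -> measurable B -> A `<=` B -> (nu A <= nu B)%E.
Proof. by move=> mA mB AB; apply: le_measure => //; rewrite inE. Qed.

Hypothesis nu_inv : shift_invariant nu.

Lemma measure_shift_by (m : int) (A : set T) :
  measurable A -> nu (shift_by m @^-1` A) = nu A.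
Proof.
have shift_by0 (z : T) : shift_by 0 z = z by apply: funext => i; rewrite /shift_by addr0.
have shift_byS (n : nat) (z : T) : shift_by n.+1%:Z z = shift_by n%:Z (left_shift z).
  by apply: funext => i; rewrite /shift_by /left_shift; congr z; lia.
have shift_by_nat (n : nat) B : measurable B -> nu (shift_by n%:Z @^-1` B) = nu B.
  move=> mB; elim: n => [|n IH].
    by apply: (congr1 nu); apply/seteqP; split => z /=; rewrite shift_by0.
  rewrite -IH -[in RHS]nu_inv; last exact: measurable_preimage_shift_by.
  by apply: (congr1 nu); apply/seteqP; split => z /=; rewrite shift_byS.
move=> mA; case: (lerP 0 m) => m0; first by rewrite -(gez0_abs m0) shift_by_nat.
have shiftK (z : T) : shift_by m (shift_by (absz m)%:Z z) = z.
  by apply: funext => i; rewrite /shift_by; congr z; lia.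
have eA : A = shift_by (absz m)%:Z @^-1` (shift_by m @^-1` A).
  by apply/seteqP; split => z /=; rewrite shiftK.
by rewrite [in RHS]eA shift_by_nat //; exact: measurable_preimage_shift_by.
Qed.

Hypothesis nu_erg : ergodic nu.
Hypothesis beta_lt_half : (nu beta0 < ((2 : R)^-1)%:E)%E.

(* If alphas were almost surely matched, the matching would send alpha-positions
   injectively to beta-positions, so the alphas could not outweigh the betas. *)
Lemma free_alpha0_neq0 : nu (free_alpha 0) != 0%E.
Proof.
pose matched_at d := shift_by d%:Z @^-1` @beta0_matched_at M d.
have mB d : measurable (@beta0_matched_at M d) by exact: measurable_beta0_matched_at.
have mA d : measurable (matched_at d) by exact: measurable_preimage_shift_by.
have mbeta : measurable beta0 by exact: measurable_cylinder.
have mUA : measurable (\bigcup_d matched_at d) by exact: bigcupT_measurable.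
have mUB : measurable (\bigcup_d @beta0_matched_at M d) by exact: bigcupT_measurable.
have alpha_le : (nu (~` beta0) <=
                 nu (free_alpha 0) + nu (\bigcup_d matched_at d))%E.
  apply: le_trans (measureU2 nu (measurable_free_alpha 0) mUA).
  apply: le_measure_nu; first exact: measurableC.
    exact: measurableU _ _ (measurable_free_alpha 0) mUA.
  by move=> z /= /alpha0_free_or_matched [|[d hd]]; [left | right; exists d].
have matched_le : (nu (\bigcup_d matched_at d) <= nu beta0)%E.
  apply: le_trans (measure_sigma_subadditive nu mA mUA (@subset_refl _ _)) _.
  rewrite (eq_eseriesr (fun d _ => measure_shift_by _ (mB d))).
  rewrite -measure_semi_bigcup //; last first.
    apply/trivIsetP => i j _ _ ij; case: (ltngtP i j) => [h|h|h].
    - exact: beta0_matched_at_disjoint.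
    - by rewrite setIC; exact: beta0_matched_at_disjoint.
    - by rewrite h eqxx in ij.
  by apply: le_measure_nu => // z [d _ []].
apply/eqP => free0; move: alpha_le; rewrite free0 add0e probability_setC // => h.
have := le_trans h matched_le; move: beta_lt_half.
rewrite -(fineK (fin_num_measure nu _ mbeta)) lte_fin -EFinB lee_fin.
by move: (fine _) => x; lra.
Qed.

Definition some_free_alpha : set T := [set z | exists k, free_alpha k z].
Definition free_alpha_before0 : set T := [set z | exists2 k : int, k < 0 & free_alpha k z].

Lemma measurable_some_free_alpha : measurable some_free_alpha.
Proof.
rewrite (_ : some_free_alpha = \bigcup_n (free_alpha (Posz n) `|` free_alpha (Negz n))).
  by apply: bigcupT_measurable => n; apply: measurableU; exact: measurable_free_alpha.
apply/seteqP; split => z /=; first by case=> -[n|n] h; exists n => //; [left|right].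
by case=> n _ [h|h]; eexists; exact: h.
Qed.

Lemma measurable_free_alpha_before0 : measurable free_alpha_before0.
Proof.
rewrite (_ : free_alpha_before0 = \bigcup_n free_alpha (Negz n)).
  by apply: bigcupT_measurable => n; exact: measurable_free_alpha.
apply/seteqP; split => z /=; first by case=> -[n|n] //; exists n.
by case=> n _ h; exists (Negz n).
Qed.

Lemma free_alpha_shift_by (k m : int) (z : T) :
  free_alpha k (shift_by m z) <-> free_alpha (k + m) z.
Proof. by rewrite -free_alpha_shift. Qed.

Lemma some_free_alpha_full : nu some_free_alpha = 1%E.
Proof.
have invariant : @left_shift M @^-1` some_free_alpha = some_free_alpha.
  apply/seteqP; split => z /= [k h].
    by exists (k + 1); apply/free_alpha_shift_by.
  by exists (k - 1); apply/free_alpha_shift_by; rewrite subrK.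
case: (nu_erg measurable_some_free_alpha invariant) => // null.
have : (nu (free_alpha 0) <= nu some_free_alpha)%E.
  apply: le_measure_nu; [exact: measurable_free_alpha | exact: measurable_some_free_alpha |].
  by move=> z h; exists 0.
by rewrite null => le0; case/negP: free_alpha0_neq0; rewrite eq_le le0 measure_ge0.
Qed.

(* A free alpha at k is seen before 0 by every shift by more than k; by shift
   invariance these shifted events all have the measure of free_alpha_before0,
   and they increase to some_free_alpha. *)
Lemma free_alpha_before0_full : nu (~` free_alpha_before0) = 0%E.
Proof.
pose W n := shift_by n%:Z @^-1` free_alpha_before0.
have mW0 := measurable_free_alpha_before0.
have mW n : measurable (W n) by exact: measurable_preimage_shift_by.
have subW n : free_alpha_before0 `<=` W n.
  move=> z [k k0 h]; exists (k - n%:Z); first lia.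
  by apply/free_alpha_shift_by; rewrite subrK.
have mD n : measurable (W n `\` free_alpha_before0) by exact: measurableD.
have D0 n : nu (W n `\` free_alpha_before0) = 0%E.
  have finW : (nu (W n) < +oo)%E := le_lt_trans (probability_le1 nu (mW n)) (ltey _).
  rewrite (measureD (mW n) mW0 finW) setIidr // /W /= measure_shift_by // subee //.
  exact: fin_num_measure.
have mU : measurable (\bigcup_n (W n `\` free_alpha_before0)) by exact: bigcupT_measurable.
have mCF : measurable (~` some_free_alpha).
  by apply: measurableC; exact: measurable_some_free_alpha.
have cover : ~` free_alpha_before0 `<=`
    ~` some_free_alpha `|` \bigcup_n (W n `\` free_alpha_before0).
  move=> z nW; have [[k h]|] := pselect (some_free_alpha z); last by left.
  right; case: (ltP k 0) => k0; first by case: nW; exists k.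
  exists (absz k).+1 => //; split => //; exists (-1) => //.
  by apply/free_alpha_shift_by; rewrite (_ : -1 + _ = k) //; lia.
have not_some0 : nu (~` some_free_alpha) = 0%E.
  rewrite probability_setC ?some_free_alpha_full ?subee //.
  exact: measurable_some_free_alpha.
have le_U : (nu (~` free_alpha_before0) <=
    nu (~` some_free_alpha) + nu (\bigcup_n (W n `\` free_alpha_before0)))%E.
  apply: le_trans (measureU2 nu mCF mU).
  exact: le_measure_nu (measurableC mW0) (measurableU _ _ mCF mU) cover.
rewrite not_some0 add0e in le_U; apply/eqP; rewrite eq_le measure_ge0 andbT.
apply: le_trans le_U (le_trans (measure_sigma_subadditive nu mD mU (@subset_refl _ _)) _).
by rewrite eseries0 // => n _ _; exact: D0.
Qed.

Lemma unmatched_beta_null i : nu (unmatched_beta i) = 0%E.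
Proof.
rewrite -[i]add0r -unmatched_beta_shift measure_shift_by;
  last exact: measurable_unmatched_beta.
apply/eqP; rewrite eq_le measure_ge0 andbT -free_alpha_before0_full le_measure_nu //.
- exact: measurable_unmatched_beta.
- by apply: measurableC; exact: measurable_free_alpha_before0.
- by move=> z h [k k0 hk]; exact: free_alpha_unmatched_beta k0 hk h.
Qed.

Lemma matchedA_complement :
  ~` @matchedA M = \bigcup_n (unmatched_beta (Posz n) `|` unmatched_beta (Negz n)).
Proof.
apply/seteqP; split => z /=.
  move=> not_matched; have [i [zi h]] : exists i, unmatched_beta i z.
    apply: contrapT => none; apply: not_matched => i.
    have [zi|] := pselect (z i = None); last by left.
    right; apply: contrapT => ne; apply: none.
    by exists i; split => // j j1 e; apply: ne; exists j.
  by case: i zi h => n zi h; exists n => //; [left|right]; split.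
case=> n _ hn matched.
have [i [zi h]] : exists i, unmatched_beta i z by case: hn; eexists; eauto.
by case: (matched i) => // -[j [j1 e]]; exact: h j j1 e.
Qed.

Lemma matchedA_full : measurable (@matchedA M) /\ nu (@matchedA M) = 1%E.
Proof.
have mU : measurable (\bigcup_n (@unmatched_beta M (Posz n) `|` unmatched_beta (Negz n))).
  by apply: bigcupT_measurable => n; apply: measurableU; exact: measurable_unmatched_beta.
have mC : measurable (@matchedA M).
  by rewrite -[@matchedA M]setCK matchedA_complement; exact: measurableC.
split=> //; rewrite -[@matchedA M]setCK probability_setC; last exact: measurableC.
suff -> : nu (~` @matchedA M) = 0%E by rewrite sube0.
rewrite matchedA_complement; apply/eqP; rewrite eq_le measure_ge0 andbT.
apply: le_trans (measure_sigma_subadditive nu _ mU (@subset_refl _ _)) _.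
  by move=> n; apply: measurableU; exact: measurable_unmatched_beta.
rewrite eseries0 // => n _ _.
rewrite measureU0 //; [exact: unmatched_beta_null | exact: measurable_unmatched_beta |
  exact: measurable_unmatched_beta | exact: unmatched_beta_null].
Qed.

End Measure.

Section Reversal.
Variable M : nat.
Local Notation T := (FullShift M).

Definition reverse (z : T) : T := fun i => z (- i).

Lemma measurable_reverse : measurable_fun setT reverse.
Proof.
apply: (@measurability _ _ _ _ setT reverse (@cylinders M)) => //.
move=> _ [_ [m [a ->]] <-]; rewrite setTI.
by rewrite (_ : _ @^-1` _ = [set z : T | z (- m) = a]) //; exact: measurable_cylinder.
Qed.

HB.instance Definition _ := isMeasurableFun.Build _ _ T T reverse measurable_reverse.

Lemma measurable_preimage_reverse (A : set T) : measurable A -> measurable (reverse @^-1` A).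
Proof. by move=> mA; rewrite -[_ @^-1` _]setTI; exact: measurable_reverse. Qed.

Lemma walkB_reverse (z : T) m :
  walk (@stepB M) z m = walk (@stepA M) (reverse z) (1 - m) - walk (@stepA M) (reverse z) 1.
Proof.
symmetry; apply: (@walk_unique _ (@stepB M) z
  (fun m => walk (@stepA M) (reverse z) (1 - m) - walk (@stepA M) (reverse z) 1)) => [|i].
  by rewrite subr0 subrr.
have -> : 1 - i = 1 - (i + 1) + 1 by lia.
rewrite walkD1 /reverse.
have -> : - (1 - (i + 1)) = i by lia.
by rewrite /stepA /stepB; case: (z i) => [x|]; lia.
Qed.

Lemma matchedB_reverse : @matchedB M = reverse @^-1` @matchedA M.
Proof.
have eq_walkB (z : T) a b : walk (@stepB M) z a = walk (@stepB M) z b <->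
    walk (@stepA M) (reverse z) (1 - a) = walk (@stepA M) (reverse z) (1 - b).
  rewrite !walkB_reverse; split => [/eqP|->//].
  by rewrite (can_eq (subrK _)) => /eqP.
apply/seteqP; split => z /= h i.
  case: (h (- i)) => [|[j [j1 /eq_walkB]]]; first by left.
  have e1 : 1 - (- i + j) = i - j + 1 by lia.
  have e2 : 1 - - i = i + 1 by lia.
  by rewrite e1 e2 => e; right; exists j.
case: (h (- i)) => [|[j [j1 e]]]; first by rewrite /reverse opprK; left.
right; exists j; split => //; apply/eq_walkB.
have e1 : 1 - (i + j) = - i - j + 1 by lia.
have e2 : 1 - i = - i + 1 by lia.
by rewrite e1 e2.
Qed.

Section Pushforward.
Variables (R : realType) (nu : probability T R).

Lemma shift_invariant_reverse :
  shift_invariant nu -> shift_invariant (distribution nu reverse).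
Proof.
move=> nu_inv A mA; rewrite /distribution /pushforward /=.
transitivity (nu (shift_by (-1) @^-1` (reverse @^-1` A))); last first.
  by rewrite measure_shift_by //; exact: measurable_preimage_reverse.
apply: (congr1 nu); apply/seteqP; split => z /=;
by have -> : left_shift (reverse z) = reverse (shift_by (-1) z)
  by apply: funext => i; rewrite /left_shift /reverse /shift_by; congr z; lia.
Qed.

Lemma ergodic_reverse : ergodic nu -> ergodic (distribution nu reverse).
Proof.
move=> nu_erg A mA hA; apply: nu_erg; first exact: measurable_preimage_reverse.
have reverse_shift (z : T) : reverse (left_shift z) = shift_by (-1) (reverse z).
  by apply: funext => i; rewrite /left_shift /reverse /shift_by; congr z; lia.
have shiftK (w : T) : left_shift (shift_by (-1) w) = w.
  by apply: funext => i; rewrite /left_shift /shift_by; congr w; lia.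
have A_shift (w : T) : A (shift_by (-1) w) <-> A w by rewrite -[in X in X <-> _]hA /= shiftK.
apply/seteqP; split => z /=; rewrite reverse_shift; first exact: (iffLR (A_shift _)).
exact: (iffRL (A_shift _)).
Qed.

Lemma reverse_beta0 :
  distribution nu reverse [set z : T | z (0%R : int) = None] =
  nu [set z : T | z (0%R : int) = None].
Proof. by apply: (congr1 nu); apply/seteqP; split => z /=; rewrite /reverse oppr0. Qed.

End Pushforward.
End Reversal.

Unset Implicit Arguments.
Theorem mainTheorem6 (M : nat) (R : realType) : (2 <= M)%N ->
  (forall nu : probability (FullShift M) R,
     shift_invariant nu -> ergodic nu ->
     (nu [set z : FullShift M | z (0%R : int) = None] < ((2 : R)^-1)%:E)%E ->
     measurable (@phi_alpha M @` (@B_alpha M)) /\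
     nu (@phi_alpha M @` (@B_alpha M)) = 1%E) /\
  (forall nu : probability (FullShift M) R,
     shift_invariant nu -> ergodic nu ->
     (nu [set z : FullShift M | z (0%R : int) = None] < ((2 : R)^-1)%:E)%E ->
     measurable (@phi_beta M @` (@B_beta M)) /\
     nu (@phi_beta M @` (@B_beta M)) = 1%E).
Proof.
move=> M2; have d0 : 'I_M := Ordinal (leq_trans (isT : (1 <= 2)%N) M2).
split=> nu nu_inv nu_erg beta_lt_half.
  by rewrite (image_phi_alpha d0); exact: matchedA_full nu_inv nu_erg beta_lt_half.
rewrite (image_phi_beta d0) matchedB_reverse.
have [mA nuA] := matchedA_full (shift_invariant_reverse nu_inv) (ergodic_reverse nu_erg)
  (eq_ind_r (fun x => (x < _)%E) beta_lt_half (reverse_beta0 nu)).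
by split; [exact: measurable_preimage_reverse | exact: nuA].
Qed.
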